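(* Under the assumptions $\max_{i,j}|A_{ij}|\le1$ and $|\xi^{(t)}|\le1$ for all $t$, let $p^{(T)}=\frac1T\sum_{t=1}^{T}e^{(i^{(t)})}$ be the empirical distribution of the arms chosen by the Influential LCB algorithm in rounds $1,\dots,T$, and let $\mathcal L_2(p)=\frac12p^\top Ap$. Then for every $T\ge K+1$, $$\mathcal L_2(p^{(T)})-\min_{p\in\Delta_K}\mathcal L_2(p)\;\le\;\frac{5K+1}{2T}+\big(2K+2\|l^{(1)}\|_\infty+4\big)\frac{\log T}{T},$$ where $\Delta_K=\{p\in\mathbb{R}^K: p\ge0,\ \sum_ip_i=1\}$.
   Context: Influential bandit problem: $K$ arms, symmetric positive semi-definite $A\in\mathbb{R}^{K\times K}$, initial loss vector $l^{(1)}\in\mathbb{R}^K$; at round $t$ the algorithm chooses $i^{(t)}$, observes $L^{(t)}=l^{(t)}_{i^{(t)}}+\xi^{(t)}$, and $l^{(t+1)}_j=l^{(t)}_j+A_{i^{(t)}j}$ for all $j$. Influential LCB algorithm: initialize $c^{(1)}_i=0$, $\hat l^{(1)}_i=-\infty$; at round $t$ choose $i^{(t)}\in\arg\min_i(\hat l^{(t)}_i-c^{(t)}_i)$, then set $\hat l^{(t+1)}_{i^{(t)}}=L^{(t)}$, $\hat l^{(t+1)}_i=\hat l^{(t)}_i$ otherwise, and $c^{(t+1)}_{i^{(t)}}=1$, $c^{(t+1)}_i=c^{(t)}_i+1$ otherwise. $e^{(i)}$ is the $i$-th standard basis vector; $\log$ is the natural logarithm. *)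

From HB Require Import structures.
From mathcomp Require Import all_boot all_order all_algebra.
From mathcomp Require Import all_classical all_reals all_analysis.
Set Implicit Arguments. Unset Strict Implicit. Unset Printing Implicit Defensive.
Import Order.TTheory GRing.Theory Num.Theory.
Local Open Scope ring_scope.

(* Rounds are numbered t = 1, 2, ...; index 0 is a dummy equal to round 1. *)

Section Influential.
Variables (R : realType) (K : nat).

Definition psd (A : 'M[R]_K) : Prop :=
  forall x : 'cV[R]_K, 0 <= (x^T *m A *m x) 0 0.

Fixpoint loss (A : 'M[R]_K) (l1 : 'I_K -> R) (i : nat -> 'I_K) (t : nat)
  : 'I_K -> R :=
  match t with
  | 0 => l1
  | 1 => l1
  | t'.+1 => fun j => loss A l1 i t' j + A (i t') j
  end.

Fixpoint lhat (i : nat -> 'I_K) (L : nat -> R) (t : nat) : 'I_K -> \bar R :=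
  match t with
  | 0 => fun _ => -oo%E
  | 1 => fun _ => -oo%E
  | t'.+1 => fun k => if k == i t' then (L t')%:E else lhat i L t' k
  end.

Fixpoint cnt (i : nat -> 'I_K) (t : nat) : 'I_K -> nat :=
  match t with
  | 0 => fun _ => 0%N
  | 1 => fun _ => 0%N
  | t'.+1 => fun k => if k == i t' then 1%N else (cnt i t' k).+1
  end.

(* i is a run of Influential LCB (arbitrary tie-breaking) with observations
   L^{(t)} = l^{(t)}_{i^{(t)}} + xi^{(t)} *)
Definition influential_lcb_run (A : 'M[R]_K) (l1 : 'I_K -> R)
  (xi : nat -> R) (i : nat -> 'I_K) : Prop :=
  let L := fun t => loss A l1 i t (i t) + xi t in
  forall t : nat, (1 <= t)%N -> forall k : 'I_K,
    (lhat i L t (i t) - ((cnt i t (i t))%:R)%:E <=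
     lhat i L t k - ((cnt i t k)%:R)%:E)%E.

Definition e_vec (k : 'I_K) : 'cV[R]_K := delta_mx k 0.

Definition emp_dist (i : nat -> 'I_K) (T : nat) : 'cV[R]_K :=
  (T%:R)^-1 *: \sum_(t < T) e_vec (i t.+1).

Definition L2 (A : 'M[R]_K) (p : 'cV[R]_K) : R := 2^-1 * (p^T *m A *m p) 0 0.

Definition in_simplex (p : 'cV[R]_K) : Prop :=
  (forall k, 0 <= p k 0) /\ \sum_k p k 0 = 1.

Definition sup_norm (v : 'I_K -> R) : R := \big[Num.max/0]_k `|v k|.

End Influential.

From HB Require Import structures.
From mathcomp Require Import all_boot all_order all_algebra.
From mathcomp Require Import all_classical all_reals all_analysis.
From mathcomp Require Import ring lra.
Import Order.TTheory GRing.Theory Num.Theory.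
Local Open Scope ring_scope.
Set Implicit Arguments. Unset Strict Implicit. Unset Printing Implicit Defensive.

(* Let n_m be the vector of arm counts after m rounds and Q_m = n_m^T A n_m,
   so that L2(p^(T)) = Q_T / (2 T^2) and l^(m+1) = l^(1) + A n_m.  Each round
   adds 2 (A n_m)_j + A_jj to Q, where j is the pulled arm.  The LCB rule with
   the confidence widths c_k guarantees (A n_m)_j <= (A n_m)_k + 2 c_j + O(1)
   for every arm k, hence (A n_m)_j <= q^T A n_m + 2 c_j + O(1) for every q in
   the simplex, and positive semidefiniteness of A turns this into the recursion
   E_(m+1) / (m+1) <= E_m / m + (4 c_j + 5 + 4 |l^(1)|_oo) / (m+1)
   for the excess E_m = Q_m - m^2 q^T A q.  The harmonic part sums to a
   logarithm, and c_j / (m+1) is bounded by the increment of the potential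
   sum_k ln (m - c_k), which never exceeds K ln T. *)

Lemma le_ln_sub (R : realType) (x y : R) :
  0 < y -> y <= x -> (x - y) / x <= ln x - ln y.
Proof.
move=> y0 yx; have x0 : 0 < x by apply: lt_le_trans yx.
have h : -1 < - ((x - y) / x) by rewrite ltrNl opprK ltr_pdivrMr // mul1r; lra.
have := le_ln1Dx h.
have -> : 1 + - ((x - y) / x) = y / x by field; rewrite gt_eqF.
rewrite ln_div ?posrE //; lra.
Qed.

Lemma sup_norm_ge0 (R : realType) (K : nat) (v : 'I_K -> R) : 0 <= sup_norm v.
Proof. exact: bigmax_ge_id. Qed.

Lemma le_sup_norm (R : realType) (K : nat) (v : 'I_K -> R) k :
  `|v k| <= sup_norm v.
Proof. exact: le_bigmax. Qed.

Lemma le_simplex_avg (R : realType) (K : nat) (x : 'I_K -> R) (q : 'cV[R]_K)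
  (c : R) : in_simplex q -> (forall b, c <= x b) -> c <= \sum_b x b * q b 0.
Proof.
move=> [q0 q1] cx; rewrite -[c]mulr1 -q1 mulr_sumr.
by apply: ler_sum => b _; apply: ler_wpM2r.
Qed.

Section QuadraticForm.
Variables (R : realType) (K : nat) (A : 'M[R]_K).

Definition bform (x z : 'cV[R]_K) : R := (x^T *m A *m z) 0 0.

Lemma bformDl x y z : bform (x + y) z = bform x z + bform y z.
Proof. by rewrite /bform linearD /= !mulmxDl mxE. Qed.

Lemma bformDr x y z : bform x (y + z) = bform x y + bform x z.
Proof. by rewrite /bform mulmxDr mxE. Qed.

Lemma bformZl c x z : bform (c *: x) z = c * bform x z.
Proof. by rewrite /bform linearZ /= -!scalemxAl mxE. Qed.

Lemma bformZr c x z : bform x (c *: z) = c * bform x z.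
Proof. by rewrite /bform -scalemxAr mxE. Qed.

Lemma bform_sumr x z : bform x z = \sum_b (x^T *m A) 0 b * z b 0.
Proof. by rewrite /bform mxE. Qed.

Lemma bform_e_vecr x k : bform x (e_vec R k) = (x^T *m A) 0 k.
Proof. by rewrite /bform /e_vec -colE mxE. Qed.

Lemma e_vec_mulmx j k : ((e_vec R j)^T *m A) 0 k = A j k.
Proof. by rewrite /e_vec trmx_delta -rowE mxE. Qed.

Hypotheses (A_sym : A^T = A) (A_psd : psd A).

Lemma bformC x z : bform x z = bform z x.
Proof.
rewrite /bform; transitivity (((x^T *m A *m z)^T) 0 0); first by rewrite [RHS]mxE.
by rewrite !trmx_mul trmxK A_sym mulmxA.
Qed.

Lemma bform_ge0 x : 0 <= bform x x.
Proof. exact: A_psd. Qed.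

Lemma bform_AMGM (c : R) x z : 2 * c * bform x z <= c ^+ 2 * bform z z + bform x x.
Proof.
have := bform_ge0 (c *: z - x).
rewrite -scaleN1r !bformDl !bformDr !bformZl !bformZr (bformC z x); lra.
Qed.

End QuadraticForm.

Section InfluentialLCB.
Variables (R : realType) (K : nat) (A : 'M[R]_K) (l1 : 'I_K -> R)
  (xi : nat -> R) (i : nat -> 'I_K).
Hypotheses (A_sym : A^T = A) (A_psd : psd A).
Hypotheses (A_bounded : forall a b : 'I_K, `|A a b| <= 1)
  (xi_bounded : forall t : nat, `|xi t| <= 1).
Hypothesis i_run : influential_lcb_run A l1 xi i.

Local Notation L := (fun t => loss A l1 i t (i t) + xi t).
Local Notation l := (loss A l1 i).
Local Notation lh := (lhat i L).
Local Notation c := (cnt i).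
Local Notation s := (sup_norm l1).

Lemma lossS t k : (0 < t)%N -> l t.+1 k = l t k + A (i t) k.
Proof. by case: t. Qed.

Lemma lhatS t k : (0 < t)%N -> lh t.+1 k = if k == i t then (L t)%:E else lh t k.
Proof. by case: t. Qed.

Lemma cntS t k : (0 < t)%N -> c t.+1 k = if k == i t then 1%N else (c t k).+1.
Proof. by case: t. Qed.

Lemma cnt_le t k : (c t.+1 k <= t)%N.
Proof. by elim: t => [//|t IH]; rewrite cntS //; case: ifP. Qed.

Lemma cnt_ge1 t k : (1 <= c t.+2 k)%N.
Proof. by rewrite cntS //; case: ifP. Qed.

Definition pulls (m : nat) : 'cV[R]_K := \sum_(s < m) e_vec R (i s.+1).

Definition drift (m : nat) (k : 'I_K) : R := ((pulls m)^T *m A) 0 k.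

Lemma pullsS m : pulls m.+1 = pulls m + e_vec R (i m.+1).
Proof. by rewrite /pulls big_ord_recr. Qed.

Lemma drift0 k : drift 0 k = 0.
Proof. by rewrite /drift /pulls big_ord0 linear0 mul0mx mxE. Qed.

Lemma driftS m k : drift m.+1 k = drift m k + A (i m.+1) k.
Proof. by rewrite /drift pullsS linearD /= mulmxDl mxE e_vec_mulmx. Qed.

Lemma loss_drift m k : l m.+1 k = l1 k + drift m k.
Proof.
elim: m => [|m IH]; first by rewrite drift0 addr0.
by rewrite lossS // IH driftS addrA.
Qed.

Lemma drift_bounded m k : `|drift m k| <= m%:R.
Proof.
elim: m => [|m IH]; first by rewrite drift0 normr0.
rewrite driftS -nat1r addrC; apply: le_trans (ler_normD _ _) _; exact: lerD.
Qed.

(* An arm pulled c rounds ago was observed with noise at most 1, and its loss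
   has moved by at most 1 per round since. *)
Lemma lhat_spec m k :
  (lh m.+1 k = -oo%E /\ c m.+1 k = m) \/
  exists r, lh m.+1 k = r%:E /\ `|r - l m.+1 k| <= (c m.+1 k)%:R + 1.
Proof.
elim: m k => [|m IH] k; first by left.
rewrite lhatS // cntS // (@lossS m.+1) //.
case: eqP => [->|/eqP nk].
  right; exists (l m.+1 (i m.+1) + xi m.+1); split => //.
  have -> : l m.+1 (i m.+1) + xi m.+1 - (l m.+1 (i m.+1) + A (i m.+1) (i m.+1))
    = xi m.+1 - A (i m.+1) (i m.+1) by ring.
  by apply: le_trans (ler_normB _ _) _; apply: lerD.
case: (IH k) => [[-> ->]|[r [-> hr]]]; [by left | right; exists r; split => //].
have -> : r - (l m.+1 k + A (i m.+1) k) = (r - l m.+1 k) - A (i m.+1) k by ring.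
by apply: le_trans (ler_normB _ _) _; rewrite -natr1 lerD.
Qed.

Lemma drift_gap m k :
  drift m (i m.+1) - drift m k <= 2 * (c m.+1 (i m.+1))%:R + 2 + 2 * s.
Proof.
have s0 := sup_norm_ge0 l1.
move: (drift_bounded m (i m.+1)) (drift_bounded m k).
move: (le_sup_norm l1 (i m.+1)) (le_sup_norm l1 k).
rewrite !ler_norml => /andP[a1 a2] /andP[b1 b2] /andP[d1 d2] /andP[e1 e2].
case: (lhat_spec m (i m.+1)) => [[hj ->]|[rj [hj hrj]]]; first lra.
have := i_run (t:=m.+1) isT k; rewrite hj.
case: (lhat_spec m k) => [[-> _]|[rk [-> hrk]]]; first by [].
rewrite -!EFinB lee_fin => h.
move: hrj hrk; rewrite !loss_drift !ler_norml => /andP[f1 f2] /andP[g1 g2].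
lra.
Qed.

Lemma drift_chosen_le m q : in_simplex q ->
  drift m (i m.+1) <=
    bform A (pulls m) q + (2 * (c m.+1 (i m.+1))%:R + 2 + 2 * s).
Proof.
move=> hq; set G := (X in _ + X).
rewrite bform_sumr -[G]mulr1 -hq.2 mulr_sumr -big_split /=.
under eq_bigr do rewrite -mulrDl.
by apply: le_simplex_avg => // b; rewrite -lerBlDl; exact: drift_gap.
Qed.

Lemma bform_pullsS m : bform A (pulls m.+1) (pulls m.+1) =
  bform A (pulls m) (pulls m) + 2 * drift m (i m.+1) + A (i m.+1) (i m.+1).
Proof.
rewrite pullsS bformDl !bformDr (bformC A_sym (e_vec R _)) !bform_e_vecr.
rewrite e_vec_mulmx /drift; ring.
Qed.

Lemma bform_pulls_le m : bform A (pulls m) (pulls m) <= m%:R ^+ 2.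
Proof.
elim: m => [|m IH]; first by rewrite /bform /pulls big_ord0 mulmx0 mxE expr0n.
move: (drift_bounded m (i m.+1)) (A_bounded (i m.+1) (i m.+1)).
rewrite bform_pullsS -natr1 !ler_norml => /andP[a1 a2] /andP[b1 b2]; nra.
Qed.

Definition potential (t : nat) : R := \sum_k ln (t%:R - (c t k)%:R).

Lemma potentialS m : potential m.+2 - potential m.+1 =
  ln m.+1%:R - ln (m.+1%:R - (c m.+1 (i m.+1))%:R).
Proof.
rewrite /potential -sumrB (bigD1 (i m.+1)) // big1 ?addr0 => [|k /negbTE ki].
  by rewrite cntS // eqxx /= addr0 -[m.+2%:R]natr1 addrK.
rewrite cntS // ki -[m.+2%:R]natr1 -[(c _ _).+1%:R]natr1.
by rewrite opprD addrACA subrr addr0 subrr.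
Qed.

Lemma potential_step m :
  (c m.+1 (i m.+1))%:R / m.+1%:R <= potential m.+2 - potential m.+1.
Proof.
rewrite potentialS.
have hc : ((c m.+1 (i m.+1))%:R : R) <= m%:R by rewrite ler_nat cnt_le.
have c0 : (0 : R) <= (c m.+1 (i m.+1))%:R by [].
have := @le_ln_sub R m.+1%:R (m.+1%:R - (c m.+1 (i m.+1))%:R).
rewrite subKr; apply; rewrite -natr1; lra.
Qed.

Lemma potential_ge0 t : 0 <= potential t.+1.
Proof.
apply: sumr_ge0 => k _; apply: ln_ge0.
have := cnt_le t k; rewrite -(ler_nat R) -natr1; lra.
Qed.

Lemma potential_le T : (0 < T)%N -> potential T.+1 <= K%:R * ln T%:R.
Proof.
case: T => // T _.
rewrite /potential mulr_natl -[in X in _ <= X](card_ord K) -sumr_const.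
apply: ler_sum => k _.
have := cnt_ge1 T k; rewrite -(ler_nat R) => h1.
have := cnt_le T.+1 k; rewrite -(ler_nat R) => h2.
rewrite ler_ln ?posrE -?natr1 ?ltr0n; lra.
Qed.

Definition excess (q : 'cV[R]_K) (m : nat) : R :=
  bform A (pulls m) (pulls m) - m%:R ^+ 2 * bform A q q.

Lemma excessS q m : in_simplex q ->
  m%:R * excess q m.+1 <=
    m.+1%:R * excess q m + m%:R * (4 * (c m.+1 (i m.+1))%:R + 5 + 4 * s).
Proof.
move=> hq; rewrite /excess bform_pullsS -natr1.
have m0 : (0 : R) <= m%:R by [].
have hv := ler_wpM2l m0 (drift_chosen_le m hq).
have hA := ler_wpM2l m0 (le_trans (ler_norm _) (A_bounded (i m.+1) (i m.+1))).
have hB := bform_AMGM A_sym A_psd m%:R (pulls m) q.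
have hQ := mulr_ge0 m0 (bform_ge0 A_psd q).
nra.
Qed.

Definition excess_bound (m : nat) : R :=
  K%:R + (5 + 4 * s) * (ln m%:R - ln K%:R) + 4 * potential m.+1.

Lemma excess_le q m : in_simplex q -> (0 < K)%N -> (K <= m)%N ->
  excess q m <= m%:R * excess_bound m.
Proof.
move=> hq K0; elim: m => [|m IH]; first by rewrite leqn0 => /eqP K00; rewrite K00 in K0.
rewrite leq_eqVlt => /orP[/eqP <-|Km].
  rewrite /excess /excess_bound subrr mulr0 addr0.
  have := bform_pulls_le K; have := bform_ge0 A_psd q.
  have := mulr_ge0 (ler0n R K) (potential_ge0 K); nra.
have m0 : (0 < m)%N by apply: leq_trans K0 Km.
have M0 : (0 : R) < m%:R by rewrite ltr0n.
set D := 4 * (c m.+1 (i m.+1))%:R + 5 + 4 * s.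
have hE : excess q m.+1 <= m.+1%:R * excess_bound m + D.
  rewrite -(ler_pM2l M0); apply: le_trans (excessS m hq) _; rewrite -/D.
  have := ler_wpM2l (ler0n R m.+1) (IH Km); rewrite -natr1; lra.
apply: le_trans hE _.
have hl : 1 / m.+1%:R <= ln m.+1%:R - ln (m%:R : R).
  by have := le_ln_sub (x := m.+1%:R) M0; rewrite -natr1 addrAC subrr add0r; apply; lra.
have hp := potential_step m.
rewrite ler_pdivrMr ?ltr0n // in hp.
rewrite ler_pdivrMr ?ltr0n // in hl.
have s5 : 0 <= 5 + 4 * s by have := sup_norm_ge0 l1; lra.
have hl5 := ler_wpM2l s5 hl.
rewrite /excess_bound /D; lra.
Qed.

Lemma L2_emp_dist_sub q T : (0 < T)%N ->
  L2 A (emp_dist R i T) - L2 A q = excess q T / (2 * T%:R ^+ 2).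
Proof.
move=> T0; have L2E p : L2 A p = 2^-1 * bform A p p by [].
rewrite !L2E /emp_dist -/(pulls T) bformZl bformZr /excess.
by field; rewrite pnatr_eq0 -lt0n.
Qed.

Lemma excess_bound_le T : (0 < K)%N -> (0 < T)%N ->
  excess_bound T <= K%:R + (5 + 4 * s + 4 * K%:R) * ln T%:R.
Proof.
move=> K0 T0; have := potential_le T0; rewrite /excess_bound.
have lnK : 0 <= ln (K%:R : R) by apply: ln_ge0; rewrite ler1n.
have := mulr_ge0 (mulr_ge0 (ler0n R 4) (sup_norm_ge0 l1)) lnK; lra.
Qed.

Lemma L2_emp_dist_sub_le q T : in_simplex q -> (0 < K)%N -> (K <= T)%N ->
  L2 A (emp_dist R i T) - L2 A q <=
    (K%:R + (5 + 4 * s + 4 * K%:R) * ln T%:R) / (2 * T%:R).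
Proof.
move=> hq K0 KT; have T0 : (0 < T)%N by apply: leq_trans KT.
have t0 : (0 : R) < T%:R by rewrite ltr0n.
rewrite L2_emp_dist_sub // ler_pdivrMr ?pmulr_rgt0 ?exprn_gt0 //.
rewrite (_ : _ / _ * _ = (K%:R + (5 + 4 * s + 4 * K%:R) * ln T%:R) * T%:R);
  last by field; rewrite gt_eqF.
rewrite mulrC; apply: le_trans (excess_le hq K0 KT) _.
by apply: ler_wpM2l; [exact: ltW | exact: excess_bound_le].
Qed.

End InfluentialLCB.

Theorem mainTheorem6 (R : realType) (K : nat) (A : 'M[R]_K) (l1 : 'I_K -> R)
  (xi : nat -> R) (i : nat -> 'I_K) :
  A^T = A -> psd A ->
  (forall a b : 'I_K, `|A a b| <= 1) ->
  (forall t : nat, `|xi t| <= 1) ->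
  influential_lcb_run A l1 xi i ->
  forall T : nat, (K.+1 <= T)%N ->
  forall q : 'cV[R]_K, in_simplex q ->
    L2 A (emp_dist R i T) - L2 A q <=
      (5 * K%:R + 1) / (2 * T%:R)
      + (2 * K%:R + 2 * sup_norm l1 + 4) * (ln (T%:R) / T%:R).
Proof.
move=> A_sym A_psd A_bnd xi_bnd i_run T KT q hq.
have K0 : (0 < K)%N by case: (i 0) => k; apply: leq_ltn_trans (leq0n k).
have T1 : (1 <= T)%N by apply: leq_trans KT.
have t0 : (0 : R) < T%:R by rewrite ltr0n.
apply: le_trans (L2_emp_dist_sub_le A_sym A_psd A_bnd xi_bnd i_run hq K0 (ltnW KT)) _.
rewrite [X in _ <= X](_ : _ =
  ((5 * K%:R + 1) + (4 * K%:R + 4 * sup_norm l1 + 8) * ln T%:R) / (2 * T%:R));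
  last by field; rewrite gt_eqF.
apply: ler_wpM2r; first by rewrite invr_ge0 mulr_ge0 // ltW.
have lnT : 0 <= ln (T%:R : R) by apply: ln_ge0; rewrite ler1n.
have := ler0n R K; lra.
Qed.
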